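(* The matrix $B^*_0$ is positive definite, i.e. all its eigenvalues are strictly positive.
   Context: Fix integers $d,M\ge1$. The activation $\sigma:\mathbb R\to\mathbb R$ is differentiable, non-polynomial, bounded and Lipschitz, with $\sigma'$ bounded and Lipschitz. The points $x^1,\dots,x^M\in\mathbb R^d$ are nonzero, bounded, and the lines $\{\xi x^m:\xi\in\mathbb R\}$ pairwise meet only at the origin. $\mu_0$ is a probability measure on $\mathbb R\times\mathbb R^d\times\mathbb R$ (variables $(c,w,\eta)$) under which $c$ is independent of $(w,\eta)$, $c$ is mean zero with compact support, and the law of $(w,\eta)$ assigns positive probability to every set of positive Lebesgue measure. $(B^*_0)_{mn}=\frac1M\int[\sigma(w\cdot x^m+\eta)\sigma(w\cdot x^n+\eta)+c^2\sigma'(w\cdot x^m+\eta)\sigma'(w\cdot x^n+\eta)(x^m\cdot x^n+1)]\,d\mu_0(c,w,\eta)$. *)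

From HB Require Import structures.
From mathcomp Require Import all_boot all_order all_algebra.
From mathcomp Require Import all_classical all_reals all_analysis.
Set Implicit Arguments. Unset Strict Implicit. Unset Printing Implicit Defensive.
Import Order.TTheory GRing.Theory Num.Theory.
Local Open Scope classical_set_scope.
Local Open Scope ring_scope.

Section Defs.
Variable R : realType.

Definition dotp (d : nat) (u v : 'I_d -> R) : R := \sum_(i < d) u i * v i.

(* R^d represented as d.-tuple R (the measurable structure of the library) *)
Definition tup (d : nat) (w : d.-tuple R) : 'I_d -> R := fun i => tnth w i.

Definition box_set (d : nat) (a b : 'I_d -> R) (a0 b0 : R) : set (d.-tuple R * R) :=
  [set p | (forall i, a i <= tnth p.1 i <= b i) /\ a0 <= p.2 <= b0].
Definition box_vol (d : nat) (a b : 'I_d -> R) (a0 b0 : R) : R :=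
  (\prod_(i < d) Num.max 0 (b i - a i)) * Num.max 0 (b0 - a0).

Definition lebesgue_outer (d : nat) (A : set (d.-tuple R * R)) : \bar R :=
  ereal_inf [set s : \bar R | exists (a b : nat -> 'I_d -> R) (a0 b0 : nat -> R),
     A `<=` \bigcup_n box_set (a n) (b n) (a0 n) (b0 n) /\
     s = (\sum_(0 <= n <oo) (box_vol (a n) (b n) (a0 n) (b0 n))%:E)%E].

Definition Bstar0 (d M : nat) (sigma : R -> R) (x : 'I_M -> 'I_d -> R)
  (mu0 : probability (R * (d.-tuple R * R))%type R) : 'M[R]_M :=
  \matrix_(m < M, n < M) (M%:R^-1 *
    \int[mu0]_z (let c := z.1 in let w := tup z.2.1 in let eta := z.2.2 in
       sigma (dotp w (x m) + eta) * sigma (dotp w (x n) + eta)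
       + c ^+ 2 * (derive1 sigma) (dotp w (x m) + eta) * (derive1 sigma) (dotp w (x n) + eta)
         * (dotp (x m) (x n) + 1))).

Definition posdef (M : nat) (B : 'M[R]_M) : Prop :=
  forall v : 'cV[R]_M, v != 0 -> 0 < (v^T *m B *m v) 0 0.

End Defs.

From HB Require Import structures.
From mathcomp Require Import all_boot all_order all_algebra.
From mathcomp Require Import all_classical all_reals all_analysis.
From mathcomp Require Import ring lra.
Set Implicit Arguments.
Unset Strict Implicit.
Unset Printing Implicit Defensive.
Import Order.TTheory GRing.Theory Num.Theory numFieldTopology.Exports numFieldNormedType.Exports.
Local Open Scope classical_set_scope.
Local Open Scope ring_scope.

(* For a column vector v, M * v^T B*_0 v is the integral of
     (sum_m v_m sigma(w.x^m + eta))^2 + c^2 * (a Gram form in the x^m, which is >= 0),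
   so it suffices that the ridge sum g(w, eta) = sum_m v_m sigma(w.x^m + eta) is not
   identically zero: being continuous, it then stays away from 0 on a small box,
   which the law of (w, eta) charges.  If g vanished identically with v_k != 0,
   shifting (w, eta) along x^k - x^n would kill the n-th term and turn the others
   into bounded increments; by induction on the number of terms, sigma would have
   constant, hence zero, increments, i.e. sigma would be constant. *)

Section RidgeFunctions.
Variable R : realType.

Lemma bounded_const_increment_eq0 (f : R -> R) (C h k : R) :
  (forall t, `|f t| <= C) -> (forall r, f (r + h) - f r = k) -> k = 0.
Proof.
move=> fC fk.
have fn (n : nat) r : f (r + n%:R * h) = f r + n%:R * k.
  elim: n r => [|n IH] r; first by rewrite !mul0r !addr0.
  have := fk (r + n%:R * h); rewrite IH -natr1 !mulrDl !mul1r addrA.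
  by move: (n%:R * k) (n%:R * h) => ? ?; lra.
apply/eqP; apply: contraT => k0.
have C0 : 0 <= C by apply: le_trans (fC 0).
have /archi_boundP : 0 <= 2 * C / `|k| by rewrite divr_ge0 ?mulr_ge0.
set n := Num.Def.archi_bound _ => hn.
have : `|n%:R * k| <= 2 * C.
  rewrite -[n%:R * k](addKr (f 0)) -(fn n 0) add0r addrC.
  by rewrite (le_trans (ler_normB _ _)) // mulr2n mulrDl mul1r lerD.
by rewrite normrM ger0_norm // -ler_pdivlMr ?normr_gt0 // leNgt hn.
Qed.

Lemma bounded_shift_invariant (f : R -> R) (h : R) :
  (exists C, forall t, `|f t| <= C) ->
  (forall a b, f (a + h) - f a = f (b + h) - f b) -> forall a, f (a + h) = f a.
Proof.
move=> [C fC] fh a; apply/eqP; rewrite -subr_eq0; apply/eqP.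
by apply: (@bounded_const_increment_eq0 f C h) => // r; apply: fh.
Qed.

Lemma shift_invariant_const (f : R -> R) (c : R) : c != 0 ->
  (forall t a, f (a + t * c) = f a) -> forall a b, f a = f b.
Proof.
by move=> c0 fc a b; rewrite -(fc ((b - a) / c) a) divfK // addrC subrK.
Qed.

Lemma dotp0l d (y : 'I_d -> R) : dotp (fun=> 0) y = 0.
Proof. by rewrite /dotp big1 // => i _; rewrite mul0r. Qed.

Lemma dotpDZl d (w u y : 'I_d -> R) (t : R) :
  dotp (fun i => w i + t * u i) y = dotp w y + t * dotp u y.
Proof.
rewrite /dotp mulr_sumr -big_split /=; apply: eq_bigr => i _.
by rewrite mulrDl mulrA.
Qed.

Lemma dotpBr d (u y z : 'I_d -> R) :
  dotp u (fun i => y i - z i) = dotp u y - dotp u z.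
Proof. by rewrite /dotp -sumrB; apply: eq_bigr => i _; rewrite mulrBr. Qed.

Lemma dotp_self_gt0 d (u : 'I_d -> R) (i : 'I_d) : u i != 0 -> 0 < dotp u u.
Proof.
move=> ui; rewrite /dotp (bigD1 i) //= ltr_pwDl ?sumr_ge0 // => [|j _].
  by rewrite -expr2 exprn_even_gt0.
by rewrite -expr2 sqr_ge0.
Qed.

Lemma ridge_sum_eq0_const (I : eqType) d (y : I -> 'I_d -> R) (k : I) (s : seq I)
    (phi : I -> R -> R) :
  (forall j, exists C, forall t, `|phi j t| <= C) ->
  (forall j, j \in s -> exists i, y j i != y k i) ->
  (forall (w : 'I_d -> R) eta,
     phi k (dotp w (y k) + eta) + \sum_(j <- s) phi j (dotp w (y j) + eta) = 0) ->
  forall a b, phi k a = phi k b.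
Proof.
elim: s phi => [|n s IH] phi phi_bdd y_neq phi_sum.
  have phi0 e : phi k e = 0.
    by have := phi_sum (fun=> 0) e; rewrite big_nil addr0 dotp0l add0r.
  by move=> a b; rewrite !phi0.
(* Shifting (w, eta) by t * (u, - u.y n) adds t * c j to the j-th argument. *)
pose u i := y k i - y n i.
pose c j := dotp u (y j) - dotp u (y n).
have ck_neq0 : c k != 0.
  have [i yi] := y_neq n (mem_head _ _).
  rewrite /c -dotpBr gt_eqF // (@dotp_self_gt0 _ u i) //.
  by rewrite subr_eq0 eq_sym.
apply: (shift_invariant_const ck_neq0) => t.
pose psi j r := phi j (r + t * c j) - phi j r.
have psi_sum (w : 'I_d -> R) eta :
    psi k (dotp w (y k) + eta) + \sum_(j <- s) psi j (dotp w (y j) + eta) = 0.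
  pose w' i := w i + t * u i; pose eta' := eta - t * dotp u (y n).
  have shift j : dotp w' (y j) + eta' = dotp w (y j) + eta + t * c j.
    by rewrite dotpDZl /eta' /c mulrBr; lra.
  have := phi_sum w' eta'; have := phi_sum w eta.
  rewrite !big_cons !shift /c subrr mulr0 addr0 /psi sumrB.
  under [in X in _ -> X -> _]eq_bigr do rewrite shift.
  by move: (\sum_(_ <- _) _) (\sum_(_ <- _) _) => ? ?; lra.
have psi_bdd j : exists C, forall r, `|psi j r| <= C.
  have [C HC] := phi_bdd j; exists (C + C) => r.
  by rewrite (le_trans (ler_normB _ _)) // lerD.
have psi_const :=
  IH psi psi_bdd (fun j js => y_neq j (mem_behead (s := n :: s) js)) psi_sum.
by apply: bounded_shift_invariant => //; apply: phi_bdd.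
Qed.

End RidgeFunctions.

Section TupleLebesgue.
Variable R : realType.
Local Open Scope ereal_scope.

Definition trcons n (p : n.-tuple R * R) : n.+1.-tuple R := [tuple of rcons p.1 p.2].

Lemma tnth_trcons n (p : n.-tuple R * R) (i : 'I_n.+1) :
  tnth (trcons p) i = if (i < n)%N then nth 0%R p.1 i else p.2.
Proof.
rewrite (tnth_nth 0%R) /= nth_rcons size_tuple.
case: ltnP => // ni; have := ltn_ord i; rewrite ltnS => ilen.
by rewrite (_ : nat_of_ord i == n) //; apply/eqP/anti_leq/andP.
Qed.

Lemma measurable_trcons n : measurable_fun setT (@trcons n).
Proof.
apply/measurable_fun_tnthP => i; case: (ltnP i n) => Hi.
  have -> : (tnth (T:=R))^~ i \o @trcons n = (fun p => tnth p.1 (Ordinal Hi)).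
    by apply: funext => p /=; rewrite tnth_trcons Hi (tnth_nth 0%R).
  exact: measurableT_comp (measurable_tnth _) measurable_fst.
have -> : (tnth (T:=R))^~ i \o @trcons n = snd.
  by apply: funext => p /=; rewrite tnth_trcons ltnNge Hi.
exact: measurable_snd.
Qed.

(* The measure structure of a pushforward depends on a measurability proof, so
   it has no canonical instance and must be named explicitly. *)
Fixpoint lebesgue_tuple n : {measure set (n.-tuple R) -> \bar R} :=
  match n with
  | 0 => @dirac _ _ [tuple] R
  | n'.+1 => @measure_function_pushforward__canonical__measure_function_Measure
      _ _ _ _ R (lebesgue_tuple n' \x lebesgue_measure) (@trcons n')
      (@measurable_trcons n')
  end.

Definition tuple_box n (a b : 'I_n -> R) : set (n.-tuple R) :=
  [set t | forall i, (a i <= tnth t i <= b i)%R].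

Lemma measurable_tuple_box n (a b : 'I_n -> R) : measurable (tuple_box a b).
Proof.
rewrite (_ : tuple_box a b = \bigcap_(i in [set: 'I_n])
    ((tnth (T:=R))^~ i @^-1` `[a i, b i])); last first.
  by apply/seteqP; split => t /= H i; [move=> _|]; rewrite ?in_itv /=; apply: H.
apply: fin_bigcap_measurable; first exact: finite_finset.
move=> i _; rewrite -[X in measurable X]setTI.
exact: (measurable_tnth i) measurableT _ (measurable_itv _).
Qed.

Lemma lebesgue_measure_itv_cc (a b : R) :
  lebesgue_measure (`[a, b]%classic : set R) = (Num.max 0 (b - a))%:E.
Proof.
rewrite lebesgue_measure_itv /= lte_fin; case: ltP => ab.
  by rewrite EFinN -EFinD max_r // subr_ge0 ltW.
by rewrite max_l // subr_le0.
Qed.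

Lemma trcons_preimage_tuple_box n (a b : 'I_n.+1 -> R) :
  @trcons n @^-1` tuple_box a b =
  tuple_box (a \o widen_ord (leqnSn n)) (b \o widen_ord (leqnSn n))
    `*` `[a ord_max, b ord_max]%classic.
Proof.
apply/seteqP; split => -[t r] /=.
  move=> H; split=> [i|]; last by have := H ord_max; rewrite tnth_trcons ltnn in_itv.
  by have := H (widen_ord (leqnSn n) i); rewrite tnth_trcons /= ltn_ord (tnth_nth 0%R).
rewrite in_itv /= => -[H1 H2] i; rewrite tnth_trcons.
case: ifP => Hi.
  have := H1 (Ordinal Hi); rewrite -(tnth_nth 0%R t (Ordinal Hi)) /=.
  by rewrite (_ : widen_ord _ _ = i) //; apply: val_inj.
rewrite (_ : i = ord_max) //; apply: val_inj => /=.
by have := ltn_ord i; rewrite ltnS leq_eqVlt Hi orbF => /eqP.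
Qed.

Lemma lebesgue_tuple_box n (a b : 'I_n -> R) :
  lebesgue_tuple n (tuple_box a b) = (\prod_(i < n) Num.max 0 (b i - a i))%:E.
Proof.
elim: n a b => [|n IH] a b.
  rewrite big_ord0 /= (_ : tuple_box a b = setT) ?diracT //.
  by apply/seteqP; split => // t _ [].
rewrite big_ord_recr /= /pushforward trcons_preimage_tuple_box.
rewrite product_measure1E ?IH ?EFinM //; last exact: measurable_tuple_box.
by congr (_ * _); exact: lebesgue_measure_itv_cc.
Qed.

Lemma box_setE d (a b : 'I_d -> R) (a0 b0 : R) :
  box_set a b a0 b0 = tuple_box a b `*` `[a0, b0]%classic.
Proof. by apply/seteqP; split => -[t r] /=; rewrite in_itv. Qed.

Lemma measurable_box_set d (a b : 'I_d -> R) (a0 b0 : R) :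
  measurable (box_set a b a0 b0).
Proof.
by rewrite box_setE; apply: measurableX; [exact: measurable_tuple_box|].
Qed.

Lemma lebesgue_box_set d (a b : 'I_d -> R) (a0 b0 : R) :
  (lebesgue_tuple d \x lebesgue_measure) (box_set a b a0 b0) =
  (box_vol a b a0 b0)%:E.
Proof.
rewrite box_setE product_measure1E ?lebesgue_tuple_box ?EFinM //;
  last exact: measurable_tuple_box.
by congr (_ * _); exact: lebesgue_measure_itv_cc.
Qed.

Lemma lebesgue_le_outer d (B : set (d.-tuple R * R)) : measurable B ->
  (lebesgue_tuple d \x lebesgue_measure) B <= lebesgue_outer B.
Proof.
move=> mB; apply/ereal_infP => _ [a [b [a0 [b0 [cov ->]]]]].
have mbox : forall n, measurable (box_set (a n) (b n) (a0 n) (b0 n)).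
  by move=> n; exact: measurable_box_set.
have := measure_sigma_subadditive (lebesgue_tuple d \x lebesgue_measure) mbox mB cov.
move/le_trans; apply; apply: lee_nneseries => [n _ _|n _]; first exact: measure_ge0.
by rewrite -lebesgue_box_set.
Qed.

End TupleLebesgue.

Definition cube (R : realType) d (p : d.-tuple R * R) (e : R) :=
  box_set (fun i => tup p.1 i - e) (fun i => tup p.1 i + e) (p.2 - e) (p.2 + e).

Lemma lebesgue_outer_cube_gt0 (R : realType) d (p : d.-tuple R * R) (e : R) :
  0 < e -> (0 < lebesgue_outer (cube p e))%E.
Proof.
move=> e0; apply: lt_le_trans (lebesgue_le_outer (measurable_box_set _ _ _ _)).
have side a : Num.max 0 ((a + e) - (a - e)) = e + e.
  by rewrite (_ : _ - _ = e + e) ?max_r // ?ltW ?addr_gt0 //; ring.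
rewrite lebesgue_box_set lte_fin /box_vol side.
under eq_bigr do rewrite side.
by rewrite mulr_gt0 ?prodr_gt0 // => *; rewrite addr_gt0.
Qed.

Lemma lipschitz_continuous (R : realType) (f : R -> R) (L : R) :
  (forall s t, `|f s - f t| <= L * `|s - t|) -> continuous f.
Proof.
move=> fL x; apply/cvgrPdist_le => e e0.
have L1 : 0 < `|L| + 1 by rewrite ltr_wpDl.
exists (e / (`|L| + 1)) => /=; first by rewrite divr_gt0.
move=> y /= xy; apply: le_trans (fL _ _) _.
apply: le_trans (_ : (`|L| + 1) * `|x - y| <= e).
  by apply: ler_wpM2r => //; rewrite (le_trans (ler_norm _)) // lerDl.
by rewrite -ler_pdivlMl // mulrC ltW.
Qed.

Lemma gram_affine_ge0 (R : realType) (M d : nat) (u : 'I_M -> R)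
    (y : 'I_M -> 'I_d -> R) :
  0 <= \sum_(n < M) \sum_(m < M) u m * u n * (dotp (y m) (y n) + 1).
Proof.
have sqr_sum (a : 'I_M -> R) :
    (\sum_(m < M) a m) ^+ 2 = \sum_(n < M) \sum_(m < M) a m * a n.
  by rewrite expr2 mulr_sumr; apply: eq_bigr => n _; rewrite mulr_suml.
rewrite (_ : \sum_(n < M) _ =
    \sum_(i < d) (\sum_(m < M) u m * y m i) ^+ 2 + (\sum_(m < M) u m) ^+ 2).
  by rewrite addr_ge0 ?sumr_ge0 // => *; rewrite sqr_ge0.
rewrite [X in _ = _ + X]sqr_sum; under [X in _ = X + _]eq_bigr do rewrite sqr_sum.
rewrite [X in _ = X + _]exchange_big /= -big_split /=; apply: eq_bigr => n _.
rewrite [X in _ = X + _]exchange_big /= -big_split /=; apply: eq_bigr => m _.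
rewrite /dotp mulrDr mulr1 mulr_sumr; congr (_ + _).
by apply: eq_bigr => i _; ring.
Qed.

Lemma posdef_eigenvalue_gt0 (R : realType) n (B : 'M[R]_n) (a : R) :
  posdef B -> eigenvalue B a -> 0 < a.
Proof.
move=> Bpd /eigenvalueP [u Bu u0].
have uT0 : u^T != 0.
  by apply: contra u0 => /eqP/(congr1 trmx); rewrite trmxK trmx0 => ->.
have := Bpd _ uT0; rewrite trmxK Bu -scalemxAl mxE.
have uu0 : 0 <= (u *m u^T) 0 0.
  by rewrite mxE sumr_ge0 // => j _; rewrite mxE -expr2 sqr_ge0.
by apply: contraTT; rewrite -!leNgt => a0; rewrite mulr_le0_ge0.
Qed.

Section RealIntegrals.
Context d (T : measurableType d) (R : realType).

Lemma Rintegral_gt0 (mu : {finite_measure set T -> \bar R}) (f : T -> R)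
    (S : set T) (k : R) :
  measurable S -> mu.-integrable setT (EFin \o f) -> (forall z, 0 <= f z) ->
  0 < k -> (forall z, S z -> k <= f z) -> (0 < mu S)%E ->
  0 < \int[mu]_z f z.
Proof.
move=> mS fi f0 k0 fk muS.
have kS_le z : k * \1_S z <= f z.
  by rewrite indicE; case: (boolP (z \in S)) => [/set_mem/fk|]; rewrite ?mulr1 ?mulr0.
have kS_int : mu.-integrable setT (EFin \o (fun z => k * \1_S z)).
  rewrite (_ : _ \o _ = fun z => k%:E * (EFin \o \1_S) z)%E.
    exact/integrableZl/integrable_indic.
  by apply/funext => z /=; rewrite EFinM.
apply: lt_le_trans (le_Rintegral measurableT kS_int fi (fun z _ => kS_le z)).
rewrite RintegralZl ?integrable_indic // /Rintegral integral_indic // setIT.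
rewrite mulr_gt0 // fine_gt0 // muS /=.
by rewrite ltey_eq fin_num_measure.
Qed.

Variable mu : {measure set T -> \bar R}.

Lemma integrable_Rsum (I : Type) (s : seq I) (f : I -> T -> R) :
  (forall i, mu.-integrable setT (EFin \o f i)) ->
  mu.-integrable setT (EFin \o (fun z => \sum_(i <- s) f i z)).
Proof.
move=> fi; rewrite (_ : _ \o _ = fun z => \sum_(i <- s) (f i z)%:E).
  by apply: integrable_sum => // i _; exact: fi.
by apply/funext => z /=; rewrite sumEFin.
Qed.

Lemma Rintegral_sum (I : Type) (s : seq I) (f : I -> T -> R) :
  (forall i, mu.-integrable setT (EFin \o f i)) ->
  \int[mu]_z (\sum_(i <- s) f i z) = \sum_(i <- s) \int[mu]_z f i z.
Proof.
move=> fi; elim: s => [|i s IH].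
  by under eq_fun do rewrite big_nil; rewrite big_nil Rintegral_cst // mul0r.
under eq_fun do rewrite big_cons.
by rewrite big_cons RintegralD ?IH ?integrable_Rsum.
Qed.

End RealIntegrals.

Section Bstar0Posdef.
Import measurable_realfun.
Variables (R : realType) (d M : nat) (sigma : R -> R) (x : 'I_M -> 'I_d -> R).
Variable mu0 : probability (R * (d.-tuple R * R))%type R.
Variables (Cs Ls Cd Ld Cx Kb : R) (K : set R).
Hypothesis sigma_bdd : forall t, `|sigma t| <= Cs.
Hypothesis sigma_lip : forall s t, `|sigma s - sigma t| <= Ls * `|s - t|.
Hypothesis dsigma_bdd : forall t, `|derive1 sigma t| <= Cd.
Hypothesis dsigma_lip :
  forall s t, `|derive1 sigma s - derive1 sigma t| <= Ld * `|s - t|.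
Hypothesis x_bdd : forall m i, `|x m i| <= Cx.
Hypothesis mK : measurable K.
Hypothesis K_full : mu0 (K `*` setT) = 1%E.
Hypothesis K_bdd : forall c, K c -> `|c| <= Kb.

Local Notation T := (R * (d.-tuple R * R))%type.

Definition ridge_arg m (p : d.-tuple R * R) := dotp (tup p.1) (x m) + p.2.

Definition Bintegrand m n (z : T) :=
  sigma (ridge_arg m z.2) * sigma (ridge_arg n z.2) +
  z.1 ^+ 2 * derive1 sigma (ridge_arg m z.2) * derive1 sigma (ridge_arg n z.2)
    * (dotp (x m) (x n) + 1).

Definition Bquad (v : 'cV[R]_M) (z : T) :=
  \sum_(n < M) \sum_(m < M) v m 0 * v n 0 * Bintegrand m n z.

Definition ridge_sum (v : 'cV[R]_M) (p : d.-tuple R * R) :=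
  \sum_(m < M) v m 0 * sigma (ridge_arg m p).

Lemma measurable_ridge_arg m : measurable_fun setT (ridge_arg m).
Proof.
apply: measurable_funD => //; apply: measurable_sum => i.
apply: measurable_funM => //.
exact: measurableT_comp (measurable_tnth i) measurable_fst.
Qed.

Lemma measurable_Bintegrand m n : measurable_fun setT (Bintegrand m n).
Proof.
have mlip (f : R -> R) L : (forall s t, `|f s - f t| <= L * `|s - t|) ->
    forall j, measurable_fun setT (fun z : T => f (ridge_arg j z.2)).
  move=> fL j; apply: measurableT_comp.
    exact: continuous_measurable_fun (lipschitz_continuous fL).
  exact: measurableT_comp (measurable_ridge_arg j) measurable_snd.
apply: measurable_funD.
  by apply: measurable_funM; exact: mlip sigma_lip _.
apply: measurable_funM => //.
do 2![apply: measurable_funM; last exact: mlip dsigma_lip _].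
exact: measurableT_comp (exprn_measurable 2) measurable_fst.
Qed.

Lemma Bintegrand_bound m n z : K z.1 ->
  `|Bintegrand m n z| <= Cs * Cs + Kb ^+ 2 * Cd * Cd * `|dotp (x m) (x n) + 1|.
Proof.
move=> Kz; have Cs0 : 0 <= Cs := le_trans (normr_ge0 _) (sigma_bdd 0).
have Cd0 : 0 <= Cd := le_trans (normr_ge0 _) (dsigma_bdd 0).
have Kb0 : 0 <= Kb := le_trans (normr_ge0 _) (K_bdd Kz).
apply: le_trans (ler_normD _ _) _; rewrite !normrM expr2.
by rewrite lerD ?ler_pM ?mulr_ge0 ?K_bdd.
Qed.

Lemma integrable_Bintegrand m n : mu0.-integrable setT (EFin \o Bintegrand m n).
Proof.
have mF : measurable_fun setT (EFin \o Bintegrand m n).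
  by apply/measurable_EFinP; exact: measurable_Bintegrand.
have mE : measurable (K `*` [set: d.-tuple R * R]) by exact: measurableX.
have nullE : mu0 (~` (K `*` setT)) = 0%E.
  by rewrite probability_setC // K_full subee.
apply/(negligible_integrable (measurableC mE) measurableT mF nullE).
rewrite setTD setCK; apply: (le_integrable mE (measurable_funTS mF) _
  (finite_measure_integrable_cst mu0
     (Cs * Cs + Kb ^+ 2 * Cd * Cd * `|dotp (x m) (x n) + 1|) mE)).
move=> z [Kz _] /=.
by rewrite lee_fin (le_trans (Bintegrand_bound m n Kz)) // ler_norm.
Qed.

Lemma integrable_Bterm (v : 'cV[R]_M) m n :
  mu0.-integrable setT (EFin \o (fun z => v m 0 * v n 0 * Bintegrand m n z)).
Proof.
rewrite (_ : _ \o _ = fun z => (v m 0 * v n 0)%:E * (EFin \o Bintegrand m n) z)%E.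
  exact/integrableZl/integrable_Bintegrand.
by apply: funext => z /=; rewrite EFinM.
Qed.

Lemma integrable_Bquad (v : 'cV[R]_M) : mu0.-integrable setT (EFin \o Bquad v).
Proof.
by do 2!apply: integrable_Rsum => ?; exact: integrable_Bterm.
Qed.

Lemma quad_Bstar0 (v : 'cV[R]_M) :
  (v^T *m Bstar0 sigma x mu0 *m v) 0 0 = M%:R^-1 * \int[mu0]_z Bquad v z.
Proof.
rewrite Rintegral_sum => [|n]; last first.
  by apply: integrable_Rsum => m; exact: integrable_Bterm.
rewrite mulr_sumr mxE; apply: eq_bigr => n _.
rewrite Rintegral_sum => [|m]; last exact: integrable_Bterm.
rewrite mxE mulr_suml mulr_sumr; apply: eq_bigr => m _.
by rewrite RintegralZl ?integrable_Bintegrand // !mxE; ring.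
Qed.

Lemma sqr_ridge_sum_le_Bquad (v : 'cV[R]_M) z : ridge_sum v z.2 ^+ 2 <= Bquad v z.
Proof.
pose u m := v m 0 * derive1 sigma (ridge_arg m z.2).
rewrite (_ : Bquad v z = ridge_sum v z.2 ^+ 2 +
    z.1 ^+ 2 * \sum_(n < M) \sum_(m < M) u m * u n * (dotp (x m) (x n) + 1)).
  by rewrite lerDl mulr_ge0 ?sqr_ge0 ?gram_affine_ge0.
rewrite /Bquad expr2 mulr_sumr mulr_sumr -big_split; apply: eq_bigr => n _ /=.
rewrite mulr_suml !mulr_sumr -big_split; apply: eq_bigr => m _ /=.
rewrite /Bintegrand /u; ring.
Qed.

Lemma ridge_arg_cube m p e q : cube p e q ->
  `|ridge_arg m q - ridge_arg m p| <= e * (d%:R * Cx + 1).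
Proof.
move=> [qw qe]; rewrite /ridge_arg /dotp opprD addrACA -sumrB mulrDr mulr1.
apply: le_trans (ler_normD _ _) _; apply: lerD; last by rewrite ler_distl.
apply: le_trans (ler_norm_sum _ _ _) (le_trans (_ : _ <= \sum_(i < d) e * Cx) _).
  apply: ler_sum => i _; rewrite -mulrBl normrM ler_pM ?x_bdd //.
  by rewrite ler_distl qw.
by rewrite sumr_const card_ord mulrCA mulr_natl.
Qed.

Definition ridge_lip (v : 'cV[R]_M) :=
  `|Ls| * `|d%:R * Cx + 1| * \sum_(m < M) `|v m 0|.

Lemma ridge_sum_cube v p e q : cube p e q ->
  `|ridge_sum v q - ridge_sum v p| <= e * ridge_lip v.
Proof.
move=> qpe; have e0 : 0 <= e by case: qpe => _ /andP[]; lra.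
rewrite /ridge_sum -sumrB; apply: le_trans (ler_norm_sum _ _ _) _.
rewrite (_ : e * _ = \sum_(m < M) e * (`|Ls| * `|d%:R * Cx + 1|) * `|v m 0|);
  last by rewrite -mulr_sumr mulrA.
apply: ler_sum => m _; rewrite -mulrBr normrM mulrC ler_wpM2r //.
apply: le_trans (sigma_lip _ _) (le_trans (ler_wpM2r (normr_ge0 _) (ler_norm Ls)) _).
rewrite mulrCA ler_wpM2l //; apply: le_trans (ridge_arg_cube m qpe) _.
by rewrite ler_wpM2l // ler_norm.
Qed.

Hypothesis x_distinct : forall m n, m != n -> exists i, x m i != x n i.
Hypothesis sigma_nonconst : ~ (forall a b, sigma a = sigma b).

Lemma ridge_sum_neq0 (v : 'cV[R]_M) : v != 0 -> exists p, ridge_sum v p != 0.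
Proof.
move=> v0; have /existsP[k vk] : [exists k, v k 0 != 0].
  apply: contraNT v0 => /existsPn v0; apply/eqP/matrixP => i j.
  by rewrite ord1 !mxE; apply/eqP/negPn/v0.
apply: contrapT => /forallNP rs0; apply: sigma_nonconst => a b.
apply: (mulfI vk).
pose s := [seq j <- index_enum 'I_M | j != k].
apply: (@ridge_sum_eq0_const _ _ _ x k s (fun j t => v j 0 * sigma t)).
- by move=> j; exists (`|v j 0| * Cs) => t; rewrite normrM ler_wpM2l.
- by move=> j; rewrite mem_filter => /andP[jk _]; exact: x_distinct.
move=> w eta; have tw : tup [tuple w i | i < d] = w.
  by apply: funext => i; rewrite /tup tnth_mktuple.
have /negP := rs0 ([tuple w i | i < d], eta).
by rewrite negbK /ridge_sum /ridge_arg /= tw (bigD1 k) //= big_filter => /eqP.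
Qed.

Hypothesis weta_pos : forall B : set (d.-tuple R * R), measurable B ->
  (0 < lebesgue_outer B)%E -> (0 < mu0 (setT `*` B))%E.

Lemma Bquad_integral_gt0 (v : 'cV[R]_M) : v != 0 -> 0 < \int[mu0]_z Bquad v z.
Proof.
move=> v0; have [p rs_p0] := ridge_sum_neq0 v0.
set g := `|ridge_sum v p|; have g0 : 0 < g by rewrite normr_gt0.
have L0 : 0 <= ridge_lip v by rewrite !mulr_ge0 ?sumr_ge0.
pose e := g / (2 * (ridge_lip v + 1)).
have e0 : 0 < e by rewrite divr_gt0 ?mulr_gt0 ?ltr_wpDl.
have eL : e * ridge_lip v <= g / 2.
  have -> : g / 2 = e * (ridge_lip v + 1).
    by rewrite /e; field; rewrite gt_eqF ?ltr_wpDl.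
  by apply: ler_wpM2l; [exact: ltW | rewrite lerDl].
have rs_cube q : cube p e q -> g / 2 <= `|ridge_sum v q|.
  move=> /(ridge_sum_cube v) rsq; have := lerB_dist (ridge_sum v p) (ridge_sum v q).
  by rewrite distrC -/g; lra.
apply: (@Rintegral_gt0 _ _ _ _ _ (setT `*` cube p e) ((g / 2) ^+ 2)).
- by apply: measurableX => //; exact: measurable_box_set.
- exact: integrable_Bquad.
- by move=> z; apply: le_trans (sqr_ridge_sum_le_Bquad v z); rewrite sqr_ge0.
- by rewrite exprn_gt0 ?divr_gt0.
- move=> z [_ /rs_cube rs_z]; apply: le_trans (sqr_ridge_sum_le_Bquad v z).
  have g2 : 0 <= g / 2 by rewrite divr_ge0 ?ltW.
  by rewrite -[X in _ <= X]real_normK ?num_real // !expr2; apply: ler_pM.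
- by apply: weta_pos; [exact: measurable_box_set | exact: lebesgue_outer_cube_gt0].
Qed.

Lemma Bstar0_posdef : (0 < M)%N -> posdef (Bstar0 sigma x mu0).
Proof.
move=> M0 v v0; rewrite quad_Bstar0 mulr_gt0 ?invr_gt0 ?ltr0n //.
exact: Bquad_integral_gt0.
Qed.

End Bstar0Posdef.

Lemma lines_distinct (R : realType) M d (x : 'I_M -> 'I_d -> R) :
  (forall m, exists i, x m i != 0) ->
  (forall m n, m != n -> forall xi zeta : R,
     (forall i, xi * x m i = zeta * x n i) -> forall i, xi * x m i = 0) ->
  forall m n, m != n -> exists i, x m i != x n i.
Proof.
move=> x_nz x_lines m n mn; have [i /negP xi] := x_nz m.
apply: contrapT => /forallNP xmn; apply: xi; apply/eqP.
rewrite -[x m i]mul1r; apply: (x_lines m n mn 1 1) => j.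
by rewrite !mul1r; apply/eqP/negPn/negP; exact: xmn.
Qed.

Theorem mainTheorem8 (R : realType) (d M : nat) (hd : (1 <= d)%N) (hM : (1 <= M)%N)
  (sigma : R -> R)
  (sigma_der : forall t : R, derivable sigma t 1)
  (sigma_nonpoly : ~ exists p : {poly R}, forall t : R, sigma t = p.[t])
  (sigma_bdd : exists C : R, forall t : R, `|sigma t| <= C)
  (sigma_lip : exists L : R, forall s t : R, `|sigma s - sigma t| <= L * `|s - t|)
  (dsigma_bdd : exists C : R, forall t : R, `|(derive1 sigma) t| <= C)
  (dsigma_lip : exists L : R, forall s t : R,
      `|(derive1 sigma) s - (derive1 sigma) t| <= L * `|s - t|)
  (x : 'I_M -> 'I_d -> R)
  (x_nz : forall m : 'I_M, exists i : 'I_d, x m i != 0)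
  (x_bdd : exists C : R, forall (m : 'I_M) (i : 'I_d), `|x m i| <= C)
  (x_lines : forall m n : 'I_M, m != n -> forall xi zeta : R,
      (forall i : 'I_d, xi * x m i = zeta * x n i) -> forall i : 'I_d, xi * x m i = 0)
  (mu0 : probability (R * (d.-tuple R * R))%type R)
  (c_indep : forall (A : set R) (B : set (d.-tuple R * R)), measurable A -> measurable B ->
      mu0 (A `*` B) = (mu0 (A `*` setT) * mu0 (setT `*` B))%E)
  (c_mean0 : (\int[mu0]_z (z.1)%:E = 0)%E)
  (c_supp : exists K : set R, compact K /\ mu0 (K `*` setT) = 1%E)
  (weta_pos : forall B : set (d.-tuple R * R), measurable B ->
      (0 < lebesgue_outer B)%E -> (0 < mu0 (setT `*` B))%E) :
  posdef (Bstar0 sigma x mu0) /\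
  (forall a : R, eigenvalue (Bstar0 sigma x mu0) a -> 0 < a).
Proof.
have [[Cs Hsigma] [Ls Lsigma]] := (sigma_bdd, sigma_lip).
have [[Cd Hdsigma] [Ld Ldsigma]] := (dsigma_bdd, dsigma_lip).
have [[Cx Hx] [K [cK K_full]]] := (x_bdd, c_supp).
have mK : measurable K.
  exact: measurable_realfun.closed_measurable (compact_closed (@Rhausdorff R) cK).
have [Kb K_bdd] : exists Kb, forall c, K c -> `|c| <= Kb.
  have [r [_ Kr]] := compact_bounded cK.
  by exists (r + 1) => c Kc; apply: Kr => //; rewrite ltrDl.
have sigma_nonconst : ~ (forall a b, sigma a = sigma b).
  move=> sigma_cst; apply: sigma_nonpoly; exists (sigma 0)%:P => t.
  by rewrite hornerC (sigma_cst t 0).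
have pd := Bstar0_posdef Hsigma Lsigma Hdsigma Ldsigma Hx mK K_full K_bdd
  (lines_distinct x_nz x_lines) sigma_nonconst weta_pos hM.
by split=> // a; exact: posdef_eigenvalue_gt0.
Qed.
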